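(* Let $\mathcal{V}$ and $\mathcal{W}$ be quaternionic two-sided Banach algebras with unit and let $\mathcal{A}:\mathcal{V}\to\mathcal{W}$ be a continuous isomorphism. Then for all $v\in\mathcal{V}$, $$B_{S,\partial}(v)=B_{S,\partial}(\mathcal{A}(v))=\bigcup_{c\in\mathcal{A}^{-1}(0)}B_{S,\partial}(v+c).$$
   Context: $\mathbb{H}$ denotes the quaternions, $Re(q)$ the real part and $|q|$ the norm of $q$. A quaternionic two-sided Banach algebra with unit is a two-sided $\mathbb{H}$-vector space with an associative product satisfying $x(y+z)=xy+xz$, $(x+y)z=xz+yz$, $q(xy)=(qx)y$, $(xy)q=x(yq)$, complete for a norm with $\|qx\|=|q|\|x\|=\|xq\|$, $\|xy\|\le\|x\|\|y\|$, and with unit $1\ne0$ of norm $1$. A homomorphism is additive, multiplicative, $\mathbb{H}$-linear on both sides and unital; an isomorphism is a bijective homomorphism. For an element $v$ of such an algebra $\mathcal{V}$, $R_q(v)=v^2-2Re(q)v+|q|^21_{\mathcal{V}}$ and $B_{S,\partial}(v)=\{q\in\mathbb{H}: R_q(v)\in\partial(\mathcal{V}\setminus\mathcal{V}^{-1})\}$, where $\mathcal{V}^{-1}$ is the set of invertible elements and $\partial$ denotes topological boundary in $\mathcal{V}$ (and analogously in $\mathcal{W}$). *)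

From Stdlib Require Import Reals.
Open Scope R_scope.

Record quat : Type := Quat { qr : R; qi : R; qj : R; qk : R }.

Definition qadd (p q : quat) : quat :=
  Quat (qr p + qr q) (qi p + qi q) (qj p + qj q) (qk p + qk q).

Definition qmul (p q : quat) : quat :=
  Quat (qr p * qr q - qi p * qi q - qj p * qj q - qk p * qk q)
       (qr p * qi q + qi p * qr q + qj p * qk q - qk p * qj q)
       (qr p * qj q - qi p * qk q + qj p * qr q + qk p * qi q)
       (qr p * qk q + qi p * qj q - qj p * qi q + qk p * qr q).

Definition qone : quat := Quat 1 0 0 0.
Definition qofR (r : R) : quat := Quat r 0 0 0.
Definition qRe (q : quat) : R := qr q.
Definition qnorm (q : quat) : R :=
  sqrt (qr q * qr q + qi q * qi q + qj q * qj q + qk q * qk q).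

Record QBanachAlg : Type := {
  car :> Type;
  zero : car;
  one : car;
  add : car -> car -> car;
  opp : car -> car;
  mul : car -> car -> car;
  lsc : quat -> car -> car;
  rsc : car -> quat -> car;
  nrm : car -> R;
  addA : forall x y z, add x (add y z) = add (add x y) z;
  addC : forall x y, add x y = add y x;
  add0 : forall x, add zero x = x;
  addN : forall x, add (opp x) x = zero;
  lscDq : forall p q x, lsc (qadd p q) x = add (lsc p x) (lsc q x);
  lscDx : forall q x y, lsc q (add x y) = add (lsc q x) (lsc q y);
  lscM : forall p q x, lsc (qmul p q) x = lsc p (lsc q x);
  lsc1 : forall x, lsc qone x = x;
  rscDq : forall p q x, rsc x (qadd p q) = add (rsc x p) (rsc x q);
  rscDx : forall q x y, rsc (add x y) q = add (rsc x q) (rsc y q);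
  rscM : forall p q x, rsc x (qmul p q) = rsc (rsc x p) q;
  rsc1 : forall x, rsc x qone = x;
  lrsc : forall p q x, rsc (lsc p x) q = lsc p (rsc x q);
  mulA : forall x y z, mul x (mul y z) = mul (mul x y) z;
  mulDr : forall x y z, mul x (add y z) = add (mul x y) (mul x z);
  mulDl : forall x y z, mul (add x y) z = add (mul x z) (mul y z);
  lscMx : forall q x y, lsc q (mul x y) = mul (lsc q x) y;
  rscMx : forall q x y, rsc (mul x y) q = mul x (rsc y q);
  mul1l : forall x, mul one x = x;
  mul1r : forall x, mul x one = x;
  one_neq0 : one <> zero;
  nrm1 : nrm one = 1;
  nrm_ge0 : forall x, 0 <= nrm x;
  nrm_eq0 : forall x, nrm x = 0 -> x = zero;
  nrm0 : nrm zero = 0;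
  nrm_triangle : forall x y, nrm (add x y) <= nrm x + nrm y;
  nrm_lsc : forall q x, nrm (lsc q x) = qnorm q * nrm x;
  nrm_rsc : forall q x, nrm (rsc x q) = qnorm q * nrm x;
  nrm_mul : forall x y, nrm (mul x y) <= nrm x * nrm y;
  complete : forall u : nat -> car,
    (forall eps, 0 < eps -> exists N, forall m n, (N <= m)%nat -> (N <= n)%nat ->
       nrm (add (u m) (opp (u n))) < eps) ->
    exists l, forall eps, 0 < eps -> exists N, forall n, (N <= n)%nat ->
       nrm (add (u n) (opp l)) < eps
}.

Arguments zero {_}. Arguments one {_}. Arguments add {_}. Arguments opp {_}.
Arguments mul {_}. Arguments lsc {_}. Arguments rsc {_}. Arguments nrm {_}.

Section Ops.
Variable V : QBanachAlg.

Definition sub (x y : V) : V := add x (opp y).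

Definition invertible (x : V) : Prop := exists y : V, mul x y = one /\ mul y x = one.

Definition boundary (S : V -> Prop) (x : V) : Prop :=
  forall eps, 0 < eps ->
    (exists y, S y /\ nrm (sub y x) < eps) /\
    (exists z, ~ S z /\ nrm (sub z x) < eps).

(** R_q(v) = v^2 - 2 Re(q) v + |q|^2 1  (real scalars act on the left) *)
Definition Rq (q : quat) (v : V) : V :=
  add (sub (mul v v) (lsc (qofR (2 * qRe q)) v)) (lsc (qofR (qnorm q ^ 2)) one).

Definition BSbd (v : V) (q : quat) : Prop :=
  boundary (fun x => ~ invertible x) (Rq q v).
End Ops.

Arguments sub {_}. Arguments invertible {_}. Arguments boundary {_}.
Arguments Rq {_}. Arguments BSbd {_}.

Definition is_hom (V W : QBanachAlg) (A : V -> W) : Prop :=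
  (forall x y, A (add x y) = add (A x) (A y)) /\
  (forall x y, A (mul x y) = mul (A x) (A y)) /\
  (forall q x, A (lsc q x) = lsc q (A x)) /\
  (forall q x, A (rsc x q) = rsc (A x) q) /\
  A one = one.

Definition is_iso (V W : QBanachAlg) (A : V -> W) : Prop :=
  is_hom V W A /\ (forall x y, A x = A y -> x = y) /\ (forall w, exists x, A x = w).

Definition is_continuous (V W : QBanachAlg) (A : V -> W) : Prop :=
  forall x eps, 0 < eps -> exists delta, 0 < delta /\
    forall y, nrm (sub y x) < delta -> nrm (sub (A y) (A x)) < eps.

(* An isomorphism commutes with R_q and maps the non-invertible elements exactly
   onto the non-invertible elements, so everything reduces to A being a
   homeomorphism, i.e. to the continuity of its inverse.  That is the open mapping
   theorem, in its Baire-category form: the images of the balls of radius n cover W,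
   so one of them is dense in some ball; by real homogeneity every w then has an
   approximate preimage of norm at most M |w| with error at most |w| / 2, and
   iterating this on the residuals converges (completeness of V) to an exact
   preimage of norm at most (2M + 1) |w|.  Injectivity makes the kernel trivial,
   which gives the second equivalence. *)

From Stdlib Require Import Reals Lra Lia Classical IndefiniteDescription.
Open Scope R_scope.

Lemma qadd_R a b : qadd (qofR a) (qofR b) = qofR (a + b).
Proof. unfold qadd, qofR; simpl; f_equal; ring. Qed.

Lemma qmul_R a b : qmul (qofR a) (qofR b) = qofR (a * b).
Proof. unfold qmul, qofR; simpl; f_equal; ring. Qed.

Lemma qnorm_R r : qnorm (qofR r) = Rabs r.
Proof.
  unfold qnorm, qofR; simpl.
  replace (r * r + 0 * 0 + 0 * 0 + 0 * 0) with (Rsqr r) by (unfold Rsqr; ring).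
  apply sqrt_Rsqr_abs.
Qed.

Section NormedGroup.
Variable X : QBanachAlg.
Implicit Types x y z : X.

Lemma addr0 x : add x zero = x.
Proof. rewrite addC; apply add0. Qed.

Lemma addrN x : add x (opp x) = zero.
Proof. rewrite addC; apply addN. Qed.

Lemma addrI x y z : add x y = add x z -> y = z.
Proof.
  intro H. rewrite <- (add0 _ y), <- (add0 _ z), <- (addN _ x), <- !addA, H.
  reflexivity.
Qed.

Lemma opp_unique x y : add y x = zero -> y = opp x.
Proof. intro H. apply (addrI x). rewrite addC, H, addrN. reflexivity. Qed.

Lemma oppK x : opp (opp x) = x.
Proof. symmetry; apply opp_unique, addrN. Qed.

Lemma oppD x y : opp (add x y) = add (opp x) (opp y).
Proof.
  symmetry; apply opp_unique.
  rewrite (addC _ x y), addA, <- (addA _ (opp x) (opp y) y), addN, addr0, addN.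
  reflexivity.
Qed.

Lemma opp0 : opp (@zero X) = zero.
Proof. symmetry; apply opp_unique, add0. Qed.

Lemma subrr x : sub x x = zero.
Proof. apply addrN. Qed.

Lemma subr0 x : sub x zero = x.
Proof. unfold sub; rewrite opp0; apply addr0. Qed.

Lemma sub_eq0 x y : sub x y = zero -> x = y.
Proof. intro H. rewrite (opp_unique _ _ H). apply oppK. Qed.

Lemma opp_sub x y : opp (sub x y) = sub y x.
Proof. unfold sub; rewrite oppD, oppK, addC. reflexivity. Qed.

Lemma sub_chain x y z : sub x z = add (sub x y) (sub y z).
Proof. unfold sub. rewrite addA, <- (addA _ x (opp y) y), addN, addr0. reflexivity. Qed.

Lemma add_subKl x y : sub (add x y) x = y.
Proof. unfold sub. rewrite (addC _ x y), <- addA, addrN. apply addr0. Qed.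

Lemma sub_addr x y z : sub x (add y z) = sub (sub x y) z.
Proof. unfold sub. rewrite oppD. apply addA. Qed.

Lemma sub_add_comm x y z : sub (add x y) z = add (sub x z) y.
Proof. unfold sub. rewrite <- !addA, (addC _ y). reflexivity. Qed.

Lemma sub_subACA (a b c d : X) : sub (sub a b) (sub c d) = sub (sub a c) (sub b d).
Proof.
  unfold sub. rewrite !oppD, !oppK.
  rewrite <- (addA _ a), (addA _ (opp b) (opp c)), (addC _ (opp b) (opp c)),
          <- (addA _ (opp c)), (addA _ a).
  reflexivity.
Qed.

Lemma lsc_zero q : lsc q (@zero X) = zero.
Proof. symmetry. apply (addrI (lsc q zero)). rewrite <- lscDx, add0, addr0. reflexivity. Qed.

Lemma lsc_opp q x : lsc q (opp x) = opp (lsc q x).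
Proof. apply opp_unique. rewrite <- lscDx, addN. apply lsc_zero. Qed.

Lemma lsc_sub q x y : lsc q (sub x y) = sub (lsc q x) (lsc q y).
Proof. unfold sub. rewrite lscDx, lsc_opp. reflexivity. Qed.

Lemma lscR0 x : lsc (qofR 0) x = zero.
Proof.
  symmetry. apply (addrI (lsc (qofR 0) x)).
  rewrite <- lscDq, qadd_R, addr0, Rplus_0_r. reflexivity.
Qed.

Lemma lscRA a b x : lsc (qofR a) (lsc (qofR b) x) = lsc (qofR (a * b)) x.
Proof. rewrite <- lscM, qmul_R. reflexivity. Qed.

Lemma nrm_lscR r x : nrm (lsc (qofR r) x) = Rabs r * nrm x.
Proof. rewrite nrm_lsc, qnorm_R. reflexivity. Qed.

Lemma nrm_opp x : nrm (opp x) = nrm x.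
Proof.
  assert (Hopp : opp x = lsc (qofR (-1)) x).
  { symmetry; apply opp_unique.
    rewrite <- (lsc1 _ x) at 2. change qone with (qofR 1).
    rewrite <- lscDq, qadd_R. replace (-1 + 1) with 0 by ring. apply lscR0. }
  rewrite Hopp, nrm_lscR, Rabs_left by lra. ring.
Qed.

Lemma nrm_subC x y : nrm (sub x y) = nrm (sub y x).
Proof. rewrite <- opp_sub, nrm_opp. reflexivity. Qed.

Lemma nrm_sub_tri x y z : nrm (sub x z) <= nrm (sub x y) + nrm (sub y z).
Proof. rewrite (sub_chain x y z). apply nrm_triangle. Qed.

Lemma nrm_sub_le x y : nrm (sub x y) <= nrm x + nrm y.
Proof. unfold sub. rewrite <- (nrm_opp y). apply nrm_triangle. Qed.

Definition converges_to (u : nat -> X) (l : X) : Prop :=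
  forall eps, 0 < eps -> exists N, forall n, (N <= n)%nat -> nrm (sub (u n) l) < eps.

Lemma converges_of_tail_bound (u : nat -> X) (b : nat -> R) :
  (forall m n, (n <= m)%nat -> nrm (sub (u m) (u n)) <= b n) ->
  (forall eps, 0 < eps -> exists N, b N < eps) ->
  exists l, converges_to u l /\ forall n, nrm (sub l (u n)) <= b n.
Proof.
  intros Hb Hsmall.
  assert (Hcauchy : forall eps, 0 < eps -> exists N, forall m n, (N <= m)%nat -> (N <= n)%nat ->
            nrm (sub (u m) (u n)) < eps).
  { intros eps Heps. destruct (Hsmall (eps / 2)) as [N HN]; [lra|].
    exists N. intros m n Hm Hn.
    pose proof (nrm_sub_tri (u m) (u N) (u n)) as Htri.
    rewrite (nrm_subC (u N)) in Htri.
    pose proof (Hb m N Hm). pose proof (Hb n N Hn). lra. }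
  destruct (complete _ u Hcauchy) as [l Hl]. change (converges_to u l) in Hl.
  exists l. split; [exact Hl|].
  intro n. apply Rle_plus_epsilon. intros eps Heps.
  destruct (Hl eps Heps) as [N HN].
  pose proof (HN (max N n) ltac:(lia)) as Hm.
  rewrite nrm_subC in Hm.
  pose proof (nrm_sub_tri l (u (max N n)) (u n)).
  pose proof (Hb (max N n) n ltac:(lia)). lra.
Qed.

End NormedGroup.

Arguments converges_to {_}.

Lemma geometric_eventually_small K eps :
  0 < eps -> exists N, forall n, (N <= n)%nat -> K * (/ 2) ^ n < eps.
Proof.
  intro Heps.
  destruct (pow_lt_1_zero (/ 2) ltac:(rewrite Rabs_pos_eq; lra) (eps / (Rabs K + 1)))
    as [N HN].
  { apply Rdiv_lt_0_compat; [lra | pose proof (Rabs_pos K); lra]. }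
  exists N. intros n Hn. specialize (HN n Hn).
  assert (Hpos : 0 < (/ 2) ^ n) by (apply pow_lt; lra).
  rewrite Rabs_pos_eq in HN by lra.
  pose proof (Rabs_pos K). pose proof (Rle_abs K).
  apply Rmult_lt_compat_l with (r := Rabs K + 1) in HN; [|lra].
  replace ((Rabs K + 1) * (eps / (Rabs K + 1))) with eps in HN by (field; lra).
  nra.
Qed.

Section Baire.
Variable X : QBanachAlg.

Definition dense_in_ball (F : X -> Prop) (c : X) (r : R) : Prop :=
  forall w, nrm (sub w c) < r -> forall eps, 0 < eps -> exists f, F f /\ nrm (sub w f) < eps.

(* A ball is a pair (center, radius). *)
Definition subball_avoiding (F : X -> Prop) (b b' : X * R) : Prop :=
  0 < snd b' /\ snd b' <= snd b / 2 /\ nrm (sub (fst b') (fst b)) + snd b' <= snd b /\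
  forall y, nrm (sub y (fst b')) <= snd b' -> ~ F y.

Lemma subball_avoiding_exists (F : X -> Prop) c r :
  0 < r -> ~ dense_in_ball F c r -> exists b', subball_avoiding F (c, r) b'.
Proof.
  intros Hr Hnd.
  assert (Hfar : exists w, nrm (sub w c) < r /\
            exists eps, 0 < eps /\ forall f, F f -> eps <= nrm (sub w f)).
  { apply NNPP; intro Hno. apply Hnd. intros w Hw eps Heps. apply NNPP; intro Hf.
    apply Hno. exists w. split; [exact Hw|]. exists eps. split; [exact Heps|].
    intros f Ff. apply Rnot_lt_le. intro Hlt. apply Hf. exists f. auto. }
  destruct Hfar as [w [Hw [eps [Heps Hf]]]].
  pose proof (nrm_ge0 _ (sub w c)).
  set (r' := Rmin (eps / 2) ((r - nrm (sub w c)) / 2)).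
  pose proof (Rmin_l (eps / 2) ((r - nrm (sub w c)) / 2)).
  pose proof (Rmin_r (eps / 2) ((r - nrm (sub w c)) / 2)).
  exists (w, r'). unfold subball_avoiding; simpl. fold r' in H0, H1.
  repeat split.
  - apply Rmin_glb_lt; lra.
  - lra.
  - lra.
  - intros y Hy Fy. specialize (Hf y Fy). rewrite nrm_subC in Hy. lra.
Qed.

Lemma baire (F : nat -> X -> Prop) :
  (forall w, exists n, F n w) -> exists n c r, 0 < r /\ dense_in_ball (F n) c r.
Proof.
  intro Hcov. apply NNPP; intro Hnowhere.
  assert (Hstep : forall nb : nat * (X * R),
             exists b', 0 < snd (snd nb) -> subball_avoiding (F (fst nb)) (snd nb) b').
  { intros [n [c r]]. simpl. destruct (classic (0 < r)) as [Hr|Hr].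
    - destruct (subball_avoiding_exists (F n) c r Hr) as [b' Hb'].
      + intro Hd. apply Hnowhere. exists n, c, r. auto.
      + exists b'. auto.
    - exists (c, r). intro; contradiction. }
  destruct (functional_choice _ Hstep) as [shrink Hshrink].
  set (s := nat_rect (fun _ => (X * R)%type) (zero, 1) (fun n b => shrink (n, b))).
  assert (Hsub : forall n, 0 < snd (s n) -> subball_avoiding (F n) (s n) (s (S n)))
    by (intro n; exact (Hshrink (n, s n))).
  assert (Hpos : forall n, 0 < snd (s n)).
  { induction n; [simpl; lra|]. apply (Hsub n IHn). }
  assert (Hnest : forall m n, (n <= m)%nat ->
            nrm (sub (fst (s m)) (fst (s n))) + snd (s m) <= snd (s n)).
  { intros m n Hnm. induction Hnm.
    - rewrite subrr, nrm0. lra.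
    - destruct (Hsub m (Hpos m)) as [_ [_ [Hin _]]].
      pose proof (nrm_sub_tri _ (fst (s (S m))) (fst (s m)) (fst (s n))). lra. }
  assert (Hhalf : forall n, snd (s n) <= (/ 2) ^ n).
  { induction n; [simpl; lra|].
    destruct (Hsub n (Hpos n)) as [_ [Hr _]]. change ((/ 2) ^ S n) with (/ 2 * (/ 2) ^ n). lra. }
  destruct (converges_of_tail_bound X (fun n => fst (s n)) (fun n => snd (s n)))
    as [l [_ Hl]].
  - intros m n Hnm. pose proof (Hnest m n Hnm). pose proof (Hpos m). lra.
  - intros eps Heps. destruct (geometric_eventually_small 1 eps Heps) as [N HN].
    exists N. pose proof (HN N (le_n N)). pose proof (Hhalf N). lra.
  - destruct (Hcov l) as [n Fn].
    destruct (Hsub n (Hpos n)) as [_ [_ [_ Havoid]]].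
    exact (Havoid l (Hl (S n)) Fn).
Qed.

End Baire.

Section Additive.
Variables V W : QBanachAlg.
Variable A : V -> W.
Hypothesis Hadd : forall x y, A (add x y) = add (A x) (A y).

Lemma additive_zero : A zero = zero.
Proof. symmetry. apply (addrI _ (A zero)). rewrite <- Hadd, add0, addr0. reflexivity. Qed.

Lemma additive_opp x : A (opp x) = opp (A x).
Proof. apply opp_unique. rewrite <- Hadd, addN. apply additive_zero. Qed.

Lemma additive_sub x y : A (sub x y) = sub (A x) (A y).
Proof. unfold sub. rewrite Hadd, additive_opp. reflexivity. Qed.

End Additive.

Lemma continuous_limit_eq (V W : QBanachAlg) (A : V -> W) (u : nat -> V) x w :
  is_continuous V W A -> converges_to u x -> converges_to (fun n => A (u n)) w -> A x = w.
Proof.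
  intros Hcont Hu HAu.
  apply sub_eq0, nrm_eq0, Rle_antisym; [|apply nrm_ge0].
  apply Rle_plus_epsilon. intros eps Heps. rewrite Rplus_0_l.
  destruct (Hcont x (eps / 2) ltac:(lra)) as [delta [Hdelta Hclose]].
  destruct (Hu delta Hdelta) as [N1 HN1].
  destruct (HAu (eps / 2) ltac:(lra)) as [N2 HN2].
  set (n := max N1 N2).
  pose proof (Hclose (u n) (HN1 n ltac:(lia))) as Hx. rewrite nrm_subC in Hx.
  pose proof (HN2 n ltac:(lia)) as Hw.
  pose proof (nrm_sub_tri _ (A x) (A (u n)) w). lra.
Qed.

Section OpenMapping.
Variables V W : QBanachAlg.
Variable A : V -> W.
Hypothesis Hadd : forall x y, A (add x y) = add (A x) (A y).
Hypothesis HlscR : forall r x, A (lsc (qofR r) x) = lsc (qofR r) (A x).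
Hypothesis Hcont : is_continuous V W A.
Hypothesis Hsurj : forall w, exists x, A x = w.

Lemma image_ball_dense : exists R r, 0 <= R /\ 0 < r /\ forall w, nrm w < r ->
  forall eps, 0 < eps -> exists u, nrm u <= R /\ nrm (sub w (A u)) < eps.
Proof.
  destruct (baire W (fun n w => exists u, nrm u <= INR n /\ A u = w)) as [n [c [r [Hr Hdense]]]].
  { intro w. destruct (Hsurj w) as [u Hu]. destruct (INR_unbounded (nrm u)) as [n Hn].
    exists n, u. split; [lra | exact Hu]. }
  exists (2 * INR n), r. pose proof (pos_INR n). repeat split; [lra | exact Hr |].
  intros w Hw eps Heps.
  destruct (Hdense (add c w) ltac:(rewrite add_subKl; exact Hw) (eps / 2) ltac:(lra))
    as [f1 [[u1 [Hu1 <-]] H1]].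
  destruct (Hdense c ltac:(rewrite subrr, nrm0; exact Hr) (eps / 2) ltac:(lra))
    as [f2 [[u2 [Hu2 <-]] H2]].
  (* w = (c + w) - c, and each of the two terms is approximated separately *)
  exists (sub u1 u2). split.
  - pose proof (nrm_sub_le _ u1 u2). lra.
  - rewrite (additive_sub _ _ _ Hadd), <- (add_subKl _ c w) at 1.
    rewrite sub_subACA.
    pose proof (nrm_sub_le _ (sub (add c w) (A u1)) (sub c (A u2))). lra.
Qed.

Lemma half_lift : exists M, 0 <= M /\
  forall w, exists u, nrm u <= M * nrm w /\ nrm (sub w (A u)) <= nrm w / 2.
Proof.
  destruct image_ball_dense as [R [r [HR [Hr Happrox]]]].
  exists (2 * R / r). split; [apply Rmult_le_pos; [lra | left; apply Rinv_0_lt_compat; lra]|].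
  intro w. pose proof (nrm_ge0 _ w) as Hw0.
  destruct (Req_dec (nrm w) 0) as [Hw|Hw].
  { exists zero. rewrite nrm0, (additive_zero _ _ _ Hadd), subr0, Hw. lra. }
  (* rescale w into the ball of radius r, approximate, and scale back *)
  set (t := r / (2 * nrm w)).
  assert (Ht : 0 < t) by (apply Rdiv_lt_0_compat; lra).
  assert (Htw : t * nrm w = r / 2) by (unfold t; field; lra).
  destruct (Happrox (lsc (qofR t) w) ltac:(rewrite nrm_lscR, Rabs_pos_eq; lra) (r / 4) ltac:(lra))
    as [u [Hu Hclose]].
  exists (lsc (qofR (/ t)) u). pose proof (Rinv_0_lt_compat t Ht) as Hit.
  rewrite nrm_lscR, Rabs_pos_eq by lra. split.
  - replace (2 * R / r * nrm w) with (/ t * R) by (unfold t; field; lra).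
    apply Rmult_le_compat_l; lra.
  - rewrite HlscR.
    replace w with (lsc (qofR (/ t)) (lsc (qofR t) w)) at 1
      by (rewrite lscRA, Rinv_l by lra; apply lsc1).
    rewrite <- lsc_sub, nrm_lscR, Rabs_pos_eq by lra.
    replace (nrm w / 2) with (/ t * (r / 4)) by (unfold t; field; lra).
    apply Rmult_le_compat_l; lra.
Qed.

Lemma open_mapping : exists C, 0 < C /\ forall w, exists x, A x = w /\ nrm x <= C * nrm w.
Proof.
  destruct half_lift as [M [HM Hlift]].
  destruct (functional_choice _ Hlift) as [g Hg].
  exists (2 * M + 1). split; [lra|]. intro w.
  set (K := M * nrm w).
  assert (HK : 0 <= K) by (apply Rmult_le_pos; [lra | apply nrm_ge0]).
  (* pairs (residual, partial preimage); each step lifts half of the residual *)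
  set (p := nat_rect (fun _ => (W * V)%type) (w, zero)
              (fun _ q => (sub (fst q) (A (g (fst q))), add (snd q) (g (fst q))))).
  assert (Hres : forall k, sub w (A (snd (p k))) = fst (p k)).
  { induction k; simpl.
    - rewrite (additive_zero _ _ _ Hadd). apply subr0.
    - rewrite Hadd, sub_addr. simpl in IHk. rewrite IHk. reflexivity. }
  assert (Hres_small : forall k, nrm (fst (p k)) <= (/ 2) ^ k * nrm w).
  { induction k; [simpl; lra|].
    destruct (Hg (fst (p k))) as [_ Hhalf]. simpl. simpl in IHk, Hhalf. lra. }
  assert (Hstep : forall m n, (n <= m)%nat ->
            nrm (sub (snd (p m)) (snd (p n))) + 2 * K * (/ 2) ^ m <= 2 * K * (/ 2) ^ n).
  { intros m n Hnm. induction Hnm.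
    - rewrite subrr, nrm0. lra.
    - destruct (Hg (fst (p m))) as [Hgm _].
      change (snd (p (S m))) with (add (snd (p m)) (g (fst (p m)))).
      rewrite sub_add_comm.
      pose proof (nrm_triangle _ (sub (snd (p m)) (snd (p n))) (g (fst (p m)))).
      pose proof (Hres_small m).
      change ((/ 2) ^ S m) with (/ 2 * (/ 2) ^ m).
      assert (M * nrm (fst (p m)) <= K * (/ 2) ^ m) by (unfold K; nra).
      lra. }
  destruct (converges_of_tail_bound V (fun n => snd (p n)) (fun n => 2 * K * (/ 2) ^ n))
    as [x [Hx Hbound]].
  - intros m n Hnm. pose proof (Hstep m n Hnm).
    assert (0 <= 2 * K * (/ 2) ^ m) by (pose proof (pow_lt (/ 2) m); nra). lra.
  - intros eps Heps. destruct (geometric_eventually_small (2 * K) eps Heps) as [N HN].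
    exists N. exact (HN N (le_n N)).
  - exists x. split.
    + apply (continuous_limit_eq _ _ _ _ _ _ Hcont Hx).
      intros eps Heps. destruct (geometric_eventually_small (nrm w) eps Heps) as [N HN].
      exists N. intros n Hn. simpl.
      rewrite nrm_subC, Hres. pose proof (Hres_small n). pose proof (HN n Hn). lra.
    + pose proof (Hbound 0%nat) as H0. simpl in H0. rewrite subr0 in H0.
      pose proof (nrm_ge0 _ w). unfold K in H0. lra.
Qed.

Lemma bounded_inverse :
  (forall x y, A x = A y -> x = y) -> exists C, 0 < C /\ forall x, nrm x <= C * nrm (A x).
Proof.
  intro Hinj. destruct open_mapping as [C [HC Hlift]].
  exists C. split; [exact HC|]. intro x.
  destruct (Hlift (A x)) as [x' [Hx' Hbound]].
  rewrite (Hinj _ _ Hx') in Hbound. exact Hbound.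
Qed.

End OpenMapping.

Lemma boundary_preimage (V W : QBanachAlg) (A : V -> W) (S : V -> Prop) (T : W -> Prop) C x :
  (forall x y, A (add x y) = add (A x) (A y)) -> is_continuous V W A ->
  (forall w, exists y, A y = w) -> 0 < C -> (forall y, nrm y <= C * nrm (A y)) ->
  (forall y, S y <-> T (A y)) ->
  (boundary S x <-> boundary T (A x)).
Proof.
  intros Hadd Hcont Hsurj HC Hbound HST. split.
  - intros Hbd eps Heps.
    destruct (Hcont x eps Heps) as [delta [Hdelta Hclose]].
    destruct (Hbd delta Hdelta) as [[y [Sy Hy]] [z [Sz Hz]]]. split.
    + exists (A y). split; [apply HST, Sy | exact (Hclose y Hy)].
    + exists (A z). split; [rewrite <- HST; exact Sz | exact (Hclose z Hz)].
  - intros Hbd eps Heps.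
    assert (Hback : forall y, nrm (sub (A y) (A x)) < eps / C -> nrm (sub y x) < eps).
    { intros y Hy. pose proof (Hbound (sub y x)) as Hyx.
      rewrite (additive_sub _ _ _ Hadd) in Hyx.
      apply Rmult_lt_compat_l with (r := C) in Hy; [|exact HC].
      replace (C * (eps / C)) with eps in Hy by (field; lra). lra. }
    destruct (Hbd (eps / C) ltac:(apply Rdiv_lt_0_compat; lra))
      as [[y' [Ty Hy]] [z' [Tz Hz]]].
    destruct (Hsurj y') as [y <-]. destruct (Hsurj z') as [z <-]. split.
    + exists y. split; [apply HST, Ty | exact (Hback y Hy)].
    + exists z. split; [rewrite HST; exact Tz | exact (Hback z Hz)].
Qed.

Section Isomorphism.
Variables V W : QBanachAlg.
Variable A : V -> W.
Hypothesis HA : is_iso V W A.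

Lemma iso_Rq q v : A (Rq q v) = Rq q (A v).
Proof.
  destruct HA as [[Hadd [Hmul [Hlsc [_ Hone]]]] _].
  unfold Rq. rewrite Hadd, !(additive_sub _ _ _ Hadd), Hmul, !Hlsc, Hone. reflexivity.
Qed.

Lemma iso_invertible x : invertible (A x) <-> invertible x.
Proof.
  destruct HA as [[_ [Hmul [_ [_ Hone]]]] [Hinj Hsurj]]. split.
  - intros [w [H1 H2]]. destruct (Hsurj w) as [y <-]. exists y.
    rewrite <- Hone, <- Hmul in H1, H2. split; apply Hinj; assumption.
  - intros [y [H1 H2]]. exists (A y). rewrite <- !Hmul, H1, H2. auto.
Qed.

Lemma iso_kernel c : A c = zero -> c = zero.
Proof.
  destruct HA as [[Hadd _] [Hinj _]]. intro Hc.
  apply Hinj. rewrite Hc. symmetry. exact (additive_zero _ _ _ Hadd).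
Qed.

Lemma BSbd_iso : is_continuous V W A -> forall v q, BSbd v q <-> BSbd (A v) q.
Proof.
  intros Hcont v q. pose proof HA as [[Hadd [_ [Hlsc _]]] [Hinj Hsurj]].
  destruct (bounded_inverse V W A Hadd (fun r => Hlsc (qofR r)) Hcont Hsurj Hinj)
    as [C [HC Hbound]].
  unfold BSbd. rewrite <- iso_Rq.
  apply (boundary_preimage V W A _ _ C _ Hadd Hcont Hsurj HC Hbound).
  intro y. rewrite iso_invertible. reflexivity.
Qed.

End Isomorphism.

Theorem mainTheorem8 (V W : QBanachAlg) (A : V -> W)
  (HA : is_iso V W A) (Hc : is_continuous V W A) :
  forall (v : V) (q : quat),
    (BSbd v q <-> BSbd (A v) q) /\
    (BSbd (A v) q <-> exists c : V, A c = zero /\ BSbd (add v c) q).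
Proof.
  intros v q. pose proof (BSbd_iso V W A HA Hc v q) as Hiso.
  split; [exact Hiso|]. split.
  - intro Hbd. exists zero. split.
    + exact (additive_zero _ _ _ (proj1 (proj1 HA))).
    + rewrite addr0. apply Hiso, Hbd.
  - intros [c [Hc0 Hbd]]. rewrite (iso_kernel V W A HA c Hc0), addr0 in Hbd.
    apply Hiso, Hbd.
Qed.
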